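(* Let $\Gamma$ be a well-ordered set and let $f:[\Gamma]^2\to\{0,1\}$ be a partition of the first kind. Let $P_f:\ell_1(\Gamma)\to\mathbb{C}$ be the quadratic functional $P_f(x)=\sum_{\{i,j\}\in f^{-1}(1)}x_ix_j$. If $Y$ is a linear subspace of $\ell_1(\Gamma)$ with $Y\subset P_f^{-1}(0)$, then $Y$ is separable.
   Context: $\ell_1(\Gamma)$ is the complex Banach space of absolutely summable families $x=(x_\gamma)_{\gamma\in\Gamma}$. $[\Gamma]^2$ denotes the set of two-element subsets of $\Gamma$, and we write $f(\alpha,\beta)$ for $f(\{\alpha,\beta\})$. For a finite set $a\subset\Gamma$ of cardinality $n$ and $k<n$, $a(k)$ denotes the $(k+1)$-th element of $a$ in the well order of $\Gamma$, so $a=\{a(0),\dots,a(n-1)\}$. A function $f:[\Gamma]^2\to\{0,1\}$ is a partition of the first kind if for every $n<\omega$, every uncountable family $A$ of pairwise disjoint subsets of $\Gamma$ each of cardinality $n$, and every $k<n$, there exist $a,b,a',b'\in A$ with $a\neq b$, $a'\neq b'$, such that $f(a(k),b(k))=1$, $f(a'(k),b'(k))=0$, and $f(a(i),b(j))=f(a'(i),b'(j))$ for all $(i,j)\in n\times n$ with $(i,j)\neq(k,k)$. *)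

From HB Require Import structures.
From mathcomp Require Import all_boot all_order all_algebra.
From mathcomp Require Import finmap.
From mathcomp Require Import complex.
From mathcomp Require Import boolp classical_sets cardinality reals.
Set Implicit Arguments. Unset Strict Implicit. Unset Printing Implicit Defensive.
Import Order.TTheory GRing.Theory Num.Theory.
Local Open Scope ring_scope.
Local Open Scope classical_set_scope.

Definition cmod (R : realType) (z : R[i]) : R := ComplexField.Normc.normc z.

(* a(k): the (k+1)-th element of the finite set a in the (well) order of
   Gamma; x0 is a dummy default, irrelevant when k < #|a|. *)
Definition ith (d : Order.disp_t) (G : orderType d) (x0 : G) (a : {fset G})
  (k : nat) : G := nth x0 (sort <=%O (enum_fset a)) k.

(* A 2-colouring of [Gamma]^2 is encoded by a symmetric f : G -> G -> bool;
   f x y (x <> y) is f({x,y}); values on the diagonal are never used. *)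
Definition symmetric_colouring (d : Order.disp_t) (G : orderType d)
  (f : G -> G -> bool) : Prop := forall x y, f x y = f y x.

Definition partition_first_kind (d : Order.disp_t) (G : orderType d)
  (f : G -> G -> bool) : Prop :=
  forall (x0 : G) (n : nat) (A : set {fset G}) (k : nat),
    ~ countable A ->
    (forall a, A a -> #|` a|%fset = n) ->
    (forall a b, A a -> A b -> a <> b -> (a `&` b)%fset = fset0) ->
    (k < n)%N ->
    exists a b a' b',
      [/\ A a, A b, A a', A b' &
      [/\ a <> b, a' <> b',
          f (ith x0 a k) (ith x0 b k) = true,
          f (ith x0 a' k) (ith x0 b' k) = false &
          forall i j, (i < n)%N -> (j < n)%N -> (i, j) <> (k, k) ->
            f (ith x0 a i) (ith x0 b j) = f (ith x0 a' i) (ith x0 b' j)]].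

Definition in_l1 (R : realType) (T : choiceType) (x : T -> R[i]) : Prop :=
  exists M : R, forall F : {fset T}, \sum_(g <- F) cmod (x g) <= M.

Definition l1_dist_lt (R : realType) (T : choiceType) (x y : T -> R[i])
  (eps : R) : Prop :=
  exists2 M : R, M < eps &
    forall F : {fset T}, \sum_(g <- F) cmod (x g - y g) <= M.

Definition has_sum (R : realType) (I : choiceType) (u : I -> R[i]) (l : R[i])
  : Prop :=
  forall eps : R, 0 < eps -> exists F0 : {fset I}, forall F : {fset I},
    (F0 `<=` F)%fset -> cmod (\sum_(p <- F) u p - l) < eps.

(* two-element subsets {i,j} of G, represented as pairs (i,j) with i < j *)
Definition pairs2 (d : Order.disp_t) (G : orderType d) :=
  {p : G * G | (p.1 < p.2)%O}.

Definition Pf_eq (R : realType) (d : Order.disp_t) (G : orderType d)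
  (f : G -> G -> bool) (x : G -> R[i]) (l : R[i]) : Prop :=
  has_sum (fun p : pairs2 G =>
             if f (val p).1 (val p).2 then x (val p).1 * x (val p).2 else 0) l.

Definition l1_subspace (R : realType) (T : choiceType) (Y : set (T -> R[i]))
  : Prop :=
  [/\ (forall y, Y y -> in_l1 y),
      Y (fun _ => 0),
      (forall y z, Y y -> Y z -> Y (fun g => y g + z g)) &
      (forall (c : R[i]) y, Y y -> Y (fun g => c * y g))].

Definition l1_separable (R : realType) (T : choiceType) (Y : set (T -> R[i]))
  : Prop :=
  exists D : set (T -> R[i]),
    [/\ countable D, D `<=` Y &
        forall y, Y y -> forall eps : R, 0 < eps ->
          exists2 z, D z & l1_dist_lt y z eps].

(* Y is separable as soon as the union of the supports of its elements is
   countable, so suppose it is uncountable. Then there are uncountably many g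
   with a y_g in Y, y_g(g) = 1, of uniformly bounded norm and essentially
   supported by a finite set containing g. A Delta-system argument and
   pigeonholes on countably many discrete invariants make the family
   homogeneous: the essential supports are r + t_g with the t_g pairwise
   disjoint of a fixed size n, g is the k-th point of t_g, the colouring f
   between r and t_g does not depend on g, and neither do the values of y_g
   along r + t_g, up to a fine grid.

   Since P_f vanishes on Y, its polarization
   B(y, z) = sum_{i <> j, f(i,j) = 1} y_i z_j is almost 0 on all the pairs
   y_a, y_b. On the other hand, by the first-kind property applied to the
   disjoint family (t_g) there are a, b, a', b' whose colourings of
   (r + t_a) x (r + t_b) and (r + t_a') x (r + t_b') agree except at the pair
   (a, b) = (t_a(k), t_b(k)), coloured 1, and (a', b'), coloured 0; hence
   B(y_a, y_b) - B(y_a', y_b') is close to y_a(a) y_b(b) = 1, a contradiction. *)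

From HB Require Import structures.
From mathcomp Require Import all_boot all_order all_algebra.
From mathcomp Require Import finmap complex ring lra.
From mathcomp Require Import boolp classical_sets cardinality reals.
Import Order.TTheory GRing.Theory Num.Theory.
Local Open Scope ring_scope.
Local Open Scope classical_set_scope.

Section ComplexModulus.
Context {R : realType}.
Implicit Types z w : R[i].

Lemma cmodE z : (cmod z)%:C%C = `|z|.
Proof. by case: z => a b; rewrite normc_def. Qed.

Lemma cmod_ge0 z : 0 <= cmod z.
Proof. by rewrite -ler0c cmodE. Qed.

Lemma cmodD z w : cmod (z + w) <= cmod z + cmod w.
Proof. exact: le_normcD. Qed.

Lemma cmodM z w : cmod (z * w) = cmod z * cmod w.
Proof. exact: Normc.normcM. Qed.

Lemma cmodN z : cmod (- z) = cmod z.
Proof. exact: normcN. Qed.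

Lemma cmod0 : cmod (0 : R[i]) = 0.
Proof. exact: Normc.normc0. Qed.

Lemma cmod1 : cmod (1 : R[i]) = 1.
Proof. exact: Normc.normc1. Qed.

Lemma cmodB_le z w : cmod (z - w) <= cmod z + cmod w.
Proof. by rewrite -(cmodN w) cmodD. Qed.

Lemma cmod_le_ReIm z : cmod z <= `|complex.Re z| + `|complex.Im z|.
Proof.
case: z => a b; rewrite /cmod /=.
have h : 0 <= `|a| + `|b| by rewrite addr_ge0.
rewrite -[X in _ <= X](ger0_norm h) -sqrtr_sqr ler_wsqrtr //.
rewrite sqrrD (real_normK (num_real a)) (real_normK (num_real b)).
have := mulr_ge0 (normr_ge0 a) (normr_ge0 b); lra.
Qed.

Lemma cmod_sum (I : Type) (s : seq I) (P : pred I) (F : I -> R[i]) :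
  cmod (\sum_(i <- s | P i) F i) <= \sum_(i <- s | P i) cmod (F i).
Proof.
elim/big_rec2: _ => [|i x y _ hy]; first by rewrite cmod0.
by apply: le_trans (cmodD _ _) _; rewrite lerD2l.
Qed.

Lemma sum_cmod_ge0 (I : Type) (s : seq I) (P : pred I) (F : I -> R[i]) :
  0 <= \sum_(i <- s | P i) cmod (F i).
Proof. by apply: sumr_ge0 => i _; apply: cmod_ge0. Qed.

End ComplexModulus.

Section Countability.
Context {I : Type}.
Implicit Types A B C D : set I.

Lemma countable_subset A B : A `<=` B -> countable B -> countable A.
Proof. by move=> AB; apply: sub_countable; apply: subset_card_le. Qed.

Lemma countableU A B : countable A -> countable B -> countable (A `|` B).
Proof.
move=> cA cB.
have -> : A `|` B = \bigcup_(b in [set: bool]) (if b then A else B).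
  apply/seteqP; split=> x; first by case=> h; [exists true | exists false].
  by case=> -[] _ h; [left | right].
by apply: bigcup_countable => // -[].
Qed.

Lemma uncountable_pigeonhole {K : countType} {D} {P : K -> I -> Prop} :
  ~ countable D -> (forall i, D i -> exists k, P k i) ->
  exists k, ~ countable (D `&` P k).
Proof.
move=> nD hP; apply: contrapT => hn; apply: nD.
apply: (@countable_subset _ (\bigcup_(k in [set: K]) (D `&` P k))).
  by move=> i Di; have [k Pk] := hP i Di; exists k.
apply: bigcup_countable => // k _.
by apply: contrapT => h; apply: hn; exists k.
Qed.

Lemma uncountable_fiber {K : countType} {D} (phi : I -> K) :
  ~ countable D -> exists k, ~ countable (D `&` [set i | phi i = k]).
Proof. by move=> nD; apply: uncountable_pigeonhole nD _ => i _; exists (phi i). Qed.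

Lemma uncountable_setD {D C} : ~ countable D -> countable C -> ~ countable (D `\` C).
Proof.
move=> nD cC cDC; apply: nD; apply: (@countable_subset _ ((D `\` C) `|` C)).
  by move=> x Dx; have [Cx|nCx] := pselect (C x); [right | left].
exact: countableU.
Qed.

Lemma uncountable_ex {D} : ~ countable D -> exists i, D i.
Proof.
move=> nD; apply: contrapT => h; apply: nD.
suff -> : D = set0 by exact: countable0.
by apply/seteqP; split=> x // Dx; apply: h; exists x.
Qed.

End Countability.

Section DeltaSystem.
Variables (I : Type) (T : choiceType) (F : I -> {fset T}).

(* A countable maximal disjoint subfamily would meet only countably many
   members, so some member could be added to it. *)
Lemma uncountable_disjoint_subfamily (D : set I) :
  ~ countable D -> (forall i, D i -> F i != fset0) ->
  (forall x, countable (D `&` [set i | x \in F i])) ->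
  exists2 E, E `<=` D /\ ~ countable E &
    forall i j, E i -> E j -> i <> j -> (F i `&` F j)%fset = fset0.
Proof.
move=> nD ne hc.
have [E [ED tE mE]] := ex_maximal_disjoint_subcollection (fun i => [set` F i]) D.
exists E; last first.
  move=> i j Ei Ej ij; apply/eqP; apply: contraT => /fset0Pn [y].
  by rewrite in_fsetI => /andP [yi yj]; case: ij; apply: tE => //; exists y.
split=> // cE.
pose U := \bigcup_(i in E) [set` F i].
have cU : countable U by apply: bigcup_countable => // i _; exact: countable_fset.
pose C := \bigcup_(x in U) (D `&` [set i | x \in F i]).
have cC : countable C by apply: bigcup_countable.
have [i0 [Di0 nCi0]] := uncountable_ex (uncountable_setD nD cC).
have meetC j y : E j -> y \in F j -> y \in F i0 -> False.
  by move=> Ej yj yi0; apply: nCi0; exists y => //; exists j.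
apply: (mE (E `|` [set i0])).
- split; first by move=> i Ei; left.
  move=> h; have [y yi0] := fset0Pn _ (ne i0 Di0).
  by apply: (meetC i0 y _ yi0 yi0); apply: h; right.
- by move=> i [/ED|->].
- move=> i j [Ei|->] [Ej|->] [y [/= yi yj]] //.
  + by apply: tE => //; exists y.
  + by case: (meetC _ _ Ei yi yj).
  + by case: (meetC _ _ Ej yj yi).
Qed.

End DeltaSystem.

Lemma delta_system {I : Type} {T : choiceType} {n} (F : I -> {fset T}) {D : set I} :
  ~ countable D -> (forall i, D i -> #|` F i| = n) ->
  exists J r, [/\ J `<=` D, ~ countable J &
    forall i j, J i -> J j -> i <> j -> (F i `&` F j)%fset = r].
Proof.
elim: n F D => [|n IH] F D nD hs.
  exists D, fset0; split=> // i j Di Dj _.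
  by rewrite (cardfs0_eq (hs i Di)) fset0I.
have [[x hx]|hnx] := pselect (exists x, ~ countable (D `&` [set i | x \in F i])).
  have hs' i : (D `&` [set i | x \in F i]) i -> #|` (F i `\ x)%fset| = n.
    by move=> [Di xi]; have := hs i Di; rewrite (cardfsD1 x) xi add1n => -[].
  have [J [r [JD nJ hJ]]] := IH (fun i => (F i `\ x)%fset) _ hx hs'.
  exists J, (x |` r)%fset; split=> //; first by move=> i /JD [].
  move=> i j Ji Jj ij; rewrite -(hJ i j Ji Jj ij).
  have [_ xi] := JD i Ji; have [_ xj] := JD j Jj.
  apply/fsetP=> y; rewrite !(in_fsetI, in_fset1U, in_fsetD1).
  by case: (eqVneq y x) => [->|] //=; rewrite xi xj.
have ne i : D i -> F i != fset0 by move=> Di; rewrite -cardfs_gt0 hs.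
have hc x : countable (D `&` [set i | x \in F i]).
  by apply: contrapT => h; apply: hnx; exists x.
have [E [ED nE] hE] := @uncountable_disjoint_subfamily _ _ F D nD ne hc.
by exists E, fset0.
Qed.

Section Grid.
Context {R : realType}.

Lemma exists_inv_nat_lt {e : R} : 0 < e -> exists m : nat, 1 / m.+1%:R < e.
Proof.
move=> he; have h0 : 0 <= 1 / e by rewrite divr_ge0 // ltW.
have hb := archi_boundP h0; exists (Num.bound (1 / e)).
set b := Num.bound _ in hb *.
have hb0 : (0 : R) < b.+1%:R by rewrite ltr0n.
rewrite ltr_pdivrMr // mulrC -ltr_pdivrMr // (lt_trans hb) //.
by rewrite ltr_nat.
Qed.

Definition grid_point (m : nat) (z : R[i]) : int * int :=
  (Num.floor (complex.Re z * m.+1%:R), Num.floor (complex.Im z * m.+1%:R)).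

Lemma eq_floor_dist_lt1 {x y : R} : Num.floor x = Num.floor y -> `|x - y| < 1.
Proof.
move=> e; have /andP [hx1 hx2] := floor_itv x; have /andP [hy1 hy2] := floor_itv y.
rewrite e in hx1 hx2; rewrite ltr_norml; apply/andP; split.
  by move: hy2 hx1; rewrite intrD; lra.
by move: hx2 hy1; rewrite intrD; lra.
Qed.

Lemma grid_point_close m z w :
  grid_point m z = grid_point m w -> cmod (z - w) <= 2 / m.+1%:R.
Proof.
case: z => a b; case: w => c e [h1 h2].
have hm : 0 < (m.+1%:R : R) by rewrite ltr0n.
have k1 := eq_floor_dist_lt1 h1; have k2 := eq_floor_dist_lt1 h2.
rewrite -mulrBl normrM (gtr0_norm hm) -ltr_pdivlMr // in k1.
rewrite -mulrBl normrM (gtr0_norm hm) -ltr_pdivlMr // in k2.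
apply: le_trans (cmod_le_ReIm _) _ => /=.
by rewrite -[2]/(1 + 1) mulrDl; apply: lerD; apply: ltW.
Qed.

End Grid.

Section OrderedFsets.
Context {d : Order.disp_t} {G : orderType d}.

Lemma mem_ith (x0 : G) (a : {fset G}) k : (k < #|` a|)%N -> ith x0 a k \in a.
Proof. by move=> hk; rewrite -(mem_sort <=%O) mem_nth // size_sort. Qed.

Lemma ith_index (x0 : G) {a : {fset G}} {x} : x \in a ->
  exists2 k, (k < #|` a|)%N & ith x0 a k = x.
Proof.
move=> xa; exists (index x (sort <=%O (enum_fset a))).
  by rewrite -(size_sort <=%O) index_mem mem_sort.
by rewrite /ith nth_index // mem_sort.
Qed.

Variable f : G -> G -> bool.

Lemma first_kind_indexed {I : Type} (x0 : G) {t : I -> {fset G}} {J : set I} {n k} :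
  partition_first_kind f -> ~ countable J -> (forall g, J g -> #|` t g| = n) ->
  (forall g h, J g -> J h -> g <> h -> (t g `&` t h)%fset = fset0) -> (k < n)%N ->
  exists a b a' b', [/\ J a, J b, J a', J b' &
    [/\ a <> b, a' <> b', f (ith x0 (t a) k) (ith x0 (t b) k),
        ~~ f (ith x0 (t a') k) (ith x0 (t b') k) &
        forall i j, (i < n)%N -> (j < n)%N -> (i, j) <> (k, k) ->
          f (ith x0 (t a) i) (ith x0 (t b) j) = f (ith x0 (t a') i) (ith x0 (t b') j)]].
Proof.
move=> hf nJ hsz hdis hkn.
have injt : {in J &, injective t}.
  move=> g h /set_mem Jg /set_mem Jh egh; apply: contrapT => gh.
  have := hdis g h Jg Jh gh; rewrite -egh fsetIid => /eqP.
  by rewrite -cardfs_eq0 hsz // => /eqP n0; rewrite n0 in hkn.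
have nA : ~ countable (t @` J) by rewrite (eq_countable (inj_card_eq injt)).
have hszA a : (t @` J) a -> #|` a| = n by case=> g Jg <-; apply: hsz.
have hdisA a b : (t @` J) a -> (t @` J) b -> a <> b -> (a `&` b)%fset = fset0.
  by case=> [g Jg <-] [h Jh <-] ab; apply: hdis => // gh; apply: ab; rewrite gh.
have [a [b [a' [b' [Aa Ab Aa' Ab' [ab ab' fab fab' hij]]]]]] :=
  hf x0 n _ k nA hszA hdisA hkn.
case: Aa Ab Aa' Ab' => al Jal <- [be Jbe <-] [al' Jal' <-] [be' Jbe' <-]
  in ab ab' fab fab' hij *.
exists al, be, al', be'; split=> //; split=> //; first by move=> e; apply: ab; rewrite e.
- by move=> e; apply: ab'; rewrite e.
- by rewrite fab'.
Qed.

End OrderedFsets.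

Section Polarization.
Context {R : realType} {d : Order.disp_t} {G : orderType d}.
Variable f : G -> G -> bool.

Definition fedge (x y : G) := (x != y) && f x y.

Definition fbilin (E : {fset G}) (y z : G -> R[i]) : R[i] :=
  \sum_(i <- E) \sum_(j <- E) (if fedge i j then y i * z j else 0).

Definition Pf_partial (E : {fset G}) (w : G -> R[i]) : R[i] :=
  \sum_(i <- E) \sum_(j <- E | (i < j)%O) (if f i j then w i * w j else 0).

Lemma fbilin_le E y z :
  cmod (fbilin E y z) <= (\sum_(i <- E) cmod (y i)) * (\sum_(j <- E) cmod (z j)).
Proof.
apply: le_trans (cmod_sum _ _ _ _) _; rewrite big_distrl /=.
apply: ler_sum => i _; apply: le_trans (cmod_sum _ _ _ _) _; rewrite big_distrr /=.
apply: ler_sum => j _; case: ifP => _; last by rewrite cmod0 mulr_ge0 ?cmod_ge0.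
by rewrite cmodM.
Qed.

Lemma fbilinB E y z y' z' :
  fbilin E y z - fbilin E y' z' =
  fbilin E (fun g => y g - y' g) z + fbilin E y' (fun g => z g - z' g).
Proof.
rewrite /fbilin -sumrB -big_split /=; apply: eq_bigr => i _.
rewrite -sumrB -big_split /=; apply: eq_bigr => j _.
by case: ifP => _; [ring | rewrite subr0 addr0].
Qed.

Hypothesis fsym : symmetric_colouring f.

Lemma fbilin_polar E y z : fbilin E y z =
  Pf_partial E (fun g => y g + z g) - Pf_partial E y - Pf_partial E z.
Proof.
pose S (F : G -> G -> R[i]) := \sum_(i <- E) \sum_(j <- E | (i < j)%O) F i j.
pose T (y z : G -> R[i]) i j := if f i j then y i * z j else 0.
transitivity (S (T y z) + S (T z y)).
  (* the terms with j < i give S (T z y), by exchange and symmetry of f *)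
  rewrite /fbilin /S.
  transitivity (S (T y z) + \sum_(i <- E) \sum_(j <- E | (j < i)%O) T y z i j).
    rewrite -big_split /=; apply: eq_bigr => i _.
    rewrite (bigID (fun j => (i < j)%O)) /=; congr (_ + _).
      by apply: eq_bigr => j ij; rewrite /fedge (lt_eqF ij).
    rewrite big_mkcond [in RHS]big_mkcond; apply: eq_bigr => j _.
    by rewrite /fedge; case: (ltgtP i j).
  congr (_ + _).
  rewrite (eq_bigr (fun i => \sum_(j <- E) (if (j < i)%O then T y z i j else 0)));
    last by move=> i _; rewrite big_mkcond.
  rewrite exchange_big /=; apply: eq_bigr => i _.
  rewrite [RHS]big_mkcond; apply: eq_bigr => j _.
  by rewrite /T fsym; case: ifP => //; case: ifP => // _ _; rewrite mulrC.
rewrite /S /Pf_partial -big_split -!sumrB; apply: eq_bigr => i _.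
rewrite -big_split -!sumrB; apply: eq_bigr => j _.
by rewrite /T /=; case: ifP => _; [ring | rewrite !subr0 addr0].
Qed.

Definition pairs_in (E : {fset G}) : {fset pairs2 G} :=
  seq_fset tt (pmap insub [seq (i, j) | i <- E, j <- E]).

Lemma mem_pairs_in E (p : pairs2 G) :
  (val p).1 \in E -> (val p).2 \in E -> p \in pairs_in E.
Proof.
move=> h1 h2; rewrite /pairs_in seq_fsetE mem_pmap_sub.
by rewrite [val p]surjective_pairing; apply: allpairs_f.
Qed.

Lemma Pf_partialE E w : Pf_partial E w =
  \sum_(p <- pairs_in E) (if f (val p).1 (val p).2 then w (val p).1 * w (val p).2 else 0).
Proof.
pose h (x : G * G) := if f x.1 x.2 then w x.1 * w x.2 else 0.
have sum_pmap s : \sum_(p <- (pmap insub s : seq (pairs2 G))) h (val p) =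
    \sum_(x <- s | (x.1 < x.2)%O) h x.
  elim: s => [|x s IH]; first by rewrite !big_nil.
  rewrite big_cons -IH /=; case: (@insubP _ _ (pairs2 G) x) => [u hu <-|hnu] /=.
    by rewrite big_cons (valP u).
  by rewrite (negbTE hnu).
symmetry; rewrite -[LHS]/(\sum_(p <- pairs_in E) h (val p)).
rewrite /pairs_in (perm_big _ (seq_fset_perm _ _)) undup_id; last first.
  apply: pmap_sub_uniq; apply: allpairs_uniq => //.
  by move=> [a b] [c e] _ _ /= [-> ->].
rewrite sum_pmap big_mkcond big_allpairs; apply: eq_bigr => i _.
by rewrite [RHS]big_mkcond.
Qed.

(* [Pf_eq f w l] says that the net of partial sums over finite sets of pairs
   converges to l; the sets [pairs_in E] are cofinal in that net. *)
Lemma Pf_partial_cvg {w l} : Pf_eq f w l -> forall eps : R, 0 < eps ->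
  exists E0 : {fset G}, forall E, (E0 `<=` E)%fset -> cmod (Pf_partial E w - l) < eps.
Proof.
move=> hw eps he; have [F0 hF0] := hw _ he.
exists ([fset (val p).1 | p in F0] `|` [fset (val p).2 | p in F0])%fset => E hE.
rewrite Pf_partialE; apply: hF0; apply/fsubsetP => p pF0.
apply: mem_pairs_in; apply: (fsubsetP hE); rewrite in_fsetU; apply/orP.
  by left; apply/imfsetP; exists p.
by right; apply/imfsetP; exists p.
Qed.

Lemma fbilin_small {y z : G -> R[i]} :
  Pf_eq f y 0 -> Pf_eq f z 0 -> Pf_eq f (fun g => y g + z g) 0 ->
  forall eta : R, 0 < eta -> exists E0 : {fset G},
    forall E, (E0 `<=` E)%fset -> cmod (fbilin E y z) < eta.
Proof.
move=> hy hz hyz eta he.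
have he3 : 0 < eta / 3%:R by rewrite divr_gt0 // ltr0n.
have [E1 h1] := Pf_partial_cvg hy _ he3; have [E2 h2] := Pf_partial_cvg hz _ he3.
have [E3 h3] := Pf_partial_cvg hyz _ he3.
exists (E1 `|` E2 `|` E3)%fset => E hE.
have s1 := h1 E (fsubset_trans (fsubset_trans (fsubsetUl _ _) (fsubsetUl _ _)) hE).
have s2 := h2 E (fsubset_trans (fsubset_trans (fsubsetUr _ _) (fsubsetUl _ _)) hE).
have s3 := h3 E (fsubset_trans (fsubsetUr _ _) hE).
rewrite !subr0 in s1 s2 s3; rewrite fbilin_polar.
apply: le_lt_trans (cmodB_le _ _) _; apply: le_lt_trans (lerD (cmodB_le _ _) (lexx _)) _.
have -> : eta = eta / 3%:R + eta / 3%:R + eta / 3%:R by field.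
by apply: ltrD => //; apply: ltrD.
Qed.

End Polarization.

Section Separability.
Context {R : realType} {T : choiceType}.
Implicit Types (y z : T -> R[i]) (E F K : {fset T}).

Lemma sum_fsetU F E (g : T -> R) :
  \sum_(x <- (F `|` E)%fset) g x = \sum_(x <- F) g x + \sum_(x <- E | x \notin F) g x.
Proof.
rewrite (big_fsetID _ (mem F)) /=; congr (_ + _).
  by apply: eq_fbigl => x; rewrite !inE /=; case: (x \in F); rewrite ?andbF ?orbT.
rewrite [RHS]big_fset_condE; apply: eq_fbigl => x; rewrite !inE /=.
by case: (x \in F); rewrite /= ?andbT ?andbF.
Qed.

(* Otherwise finite sets with tails larger than del could be stacked up to
   make the partial sums of |y| unbounded. *)
Lemma l1_tail_small {y} : in_l1 y -> forall del : R, 0 < del ->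
  exists F, forall E, \sum_(x <- E | x \notin F) cmod (y x) <= del.
Proof.
move=> [M hM] del hd; apply: contrapT => hn.
have H F : exists E, del < \sum_(x <- E | x \notin F) cmod (y x).
  apply: contrapT => h; apply: hn; exists F => E.
  by rewrite leNgt; apply/negP => hl; apply: h; exists E.
have hk (k : nat) : exists F, k%:R * del <= \sum_(x <- F) cmod (y x).
  elim: k => [|k [F hF]]; first by exists fset0; rewrite mul0r sum_cmod_ge0.
  have [E hE] := H F; exists (F `|` E)%fset; rewrite sum_fsetU mulrSr mulrDl mul1r.
  by apply: lerD => //; apply: ltW.
have h0 : 0 <= `|M| / del by rewrite divr_ge0 // ltW.
have [F hF] := hk (Num.bound (`|M| / del)).
have := archi_boundP h0; rewrite ltr_pdivrMr // => hb.
by have := hM F; have := ler_norm M; lra.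
Qed.

Lemma l1_finite_essential_support {y} : in_l1 y -> forall del : R, 0 < del ->
  exists2 A : set T, finite_set A /\ A `<=` [set x | y x != 0] &
    forall E, \sum_(x <- E | x \notin fset_set A) cmod (y x) <= del.
Proof.
move=> hy del hd; have [F hF] := l1_tail_small hy _ hd.
pose A := [set x | x \in F /\ y x != 0].
have fA : finite_set A by apply: (sub_finite_set (B := [set` F])) (finite_fset F) => x [].
have inA x : (x \in fset_set A) = (x \in F) && (y x != 0).
  rewrite in_fset_set //; apply/idP/idP; first by rewrite inE => -[-> ->].
  by move=> /andP [? ?]; rewrite inE.
exists A => [|E]; first by split=> // x [].
apply: le_trans (hF E); rewrite big_mkcond [X in _ <= X]big_mkcond /=.
apply: ler_sum => x _; rewrite inA negb_and negbK.
by case: (x \in F) => //=; case: eqP => [->|]; rewrite ?cmod0.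
Qed.

Definition grid_code (m : nat) K y := [seq grid_point m (y x) | x <- enum_fset K].

Lemma l1_dist_grid_code (m : nat) K y z (e : R) :
  (forall E, \sum_(x <- E | x \notin K) cmod (y x) <= e) ->
  (forall E, \sum_(x <- E | x \notin K) cmod (z x) <= e) ->
  grid_code m K y = grid_code m K z ->
  forall E, \sum_(x <- E) cmod (y x - z x) <= #|` K|%:R * (2 / m.+1%:R) + (e + e).
Proof.
move=> ty tz cyz E; rewrite (bigID (fun x => x \in K)) /=; apply: lerD.
  apply: (@le_trans _ _ (\sum_(x <- K) cmod (y x - z x))).
    rewrite (@eq_fbigl_cond _ _ _ _ E K (fun x => x \in K) (fun x => x \in E)); last first.
      by move=> x; rewrite !inE /= andbC.
    by rewrite [X in _ <= X](bigID (fun x => x \in E)) /= lerDl sum_cmod_ge0.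
  have -> : #|` K|%:R * (2 / m.+1%:R) = \sum_(x <- K) (2 / m.+1%:R : R).
    by rewrite big_const_seq count_predT iter_addr_0 mulr_natl.
  rewrite big_seq [X in _ <= X]big_seq; apply: ler_sum => x xK.
  by apply: grid_point_close; apply: (eq_in_map _ _ _).2 cyz x xK.
apply: le_trans (ler_sum _ (fun x _ => cmodB_le (y x) (z x))) _.
by rewrite big_split /=; apply: lerD.
Qed.

Definition joint_support (Y : set (T -> R[i])) := [set x | exists y, Y y /\ y x != 0].

(* The dense subset picks, for every finite A of the joint support and all
   precisions m1, m2 and grid codes c, one element of Y whose tail off A is at
   most 1/(m1+1) and whose values on A have codes c at precision m2. *)
Lemma l1_separable_countable_support (Y : set (T -> R[i])) :
  l1_subspace Y -> countable (joint_support Y) -> l1_separable Y.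
Proof.
move=> [hl1 h0 _ _] cS.
pose KT := (nat * nat * seq (int * int))%type.
pose C (k : KT * set T) : set (T -> R[i]) := [set z | Y z /\
  (forall E, \sum_(x <- E | x \notin fset_set k.2) cmod (z x) <= 1 / k.1.1.1.+1%:R) /\
  grid_code k.1.1.2 (fset_set k.2) z = k.1.2].
have /all_sig [pick pickC] k : {z | Y z /\ ((exists z, C k z) -> C k z)}.
  case: (pselect (exists z, C k z)) => [/cid [z Cz]|nC]; first by exists z; case: Cz.
  by exists (fun=> 0).
pose KS := [set: KT] `*` [set A : set T | A `<=` joint_support Y /\ finite_set A].
have cKS : countable KS.
  by apply: countableX; [exact: countableP | exact: countable_finite_subset].
exists (pick @` KS); split.
- exact: card_le_trans (card_image_le _ _) cKS.
- by move=> _ [k _ <-]; case: (pickC k).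
move=> y Yy eps he.
have he4 : 0 < eps / 4%:R by rewrite divr_gt0 // ltr0n.
have [m1 hm1] := exists_inv_nat_lt he4.
have hd1 : 0 < 1 / (m1.+1%:R : R) by rewrite divr_gt0 // ltr0n.
have [A [fA Ay] tyK] := l1_finite_essential_support (hl1 _ Yy) _ hd1.
pose K := fset_set A.
have he8 : 0 < eps / (8 * (#|` K|.+1)%:R) by rewrite divr_gt0 // mulr_gt0 // ltr0n.
have [m2 hm2] := exists_inv_nat_lt he8.
pose k : KT * set T := (m1, m2, grid_code m2 K y, A).
have [_ [tz cz]] := (pickC k).2 (ex_intro _ y (conj Yy (conj tyK erefl))).
exists (pick k); first by exists k => //; split=> //; split=> // x /Ay yx; exists y.
exists (#|` K|%:R * (2 / m2.+1%:R) + (1 / m1.+1%:R + 1 / m1.+1%:R)).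
  have h1 : (m2.+1%:R : R)^-1 * (8 * (#|` K|%:R + 1)) < eps.
    by rewrite natr1 -div1r -ltr_pdivlMr // mulr_gt0 // ltr0n.
  rewrite !div1r in hm1 *; rewrite mulrCA.
  set a := (m2.+1%:R : R)^-1 in h1 *; set n := (#|` K|%:R : R) in h1 *.
  have ha : 0 <= a by rewrite invr_ge0.
  have : 0 <= n * a by rewrite mulr_ge0.
  set b := (m1.+1%:R : R)^-1 in hm1 *; lra.
by apply: l1_dist_grid_code tyK tz _; rewrite cz.
Qed.

End Separability.

Lemma big_fset_supp_nth {T : choiceType} {V : nmodType} {E S : {fset T}} {L : seq T}
    (x0 : T) {h : T -> V} :
  (S `<=` E)%fset -> perm_eq (enum_fset S) L -> (forall x, x \notin S -> h x = 0) ->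
  \sum_(x <- E) h x = \sum_(u < size L) h (nth x0 L u).
Proof.
move=> SE pSL h0.
rewrite -(@big_fset_incl _ _ _ _ S E h SE); last by move=> x _ /h0.
by rewrite (perm_big _ pSL) (big_nth x0) big_mkord.
Qed.

Section RootedList.
Context {d : Order.disp_t} {G : orderType d}.

Definition rooted_list (r t : {fset G}) : seq G := enum_fset r ++ sort <=%O (enum_fset t).

Lemma perm_rooted_list {r t : {fset G}} : (forall x, x \in t -> x \notin r) ->
  perm_eq (enum_fset (r `|` t)%fset) (rooted_list r t).
Proof.
move=> dis; apply: uniq_perm; first exact: fset_uniq.
  rewrite cat_uniq fset_uniq sort_uniq fset_uniq /= andbT.
  by apply/hasPn => x; rewrite mem_sort => /dis.
by move=> x; rewrite mem_cat mem_sort in_fsetU.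
Qed.

Lemma size_rooted_list r t : size (rooted_list r t) = (#|` r| + #|` t|)%N.
Proof. by rewrite size_cat size_sort. Qed.

Lemma nth_rooted_list x0 r t u : nth x0 (rooted_list r t) u =
  if (u < #|` r|)%N then nth x0 (enum_fset r) u else ith x0 t (u - #|` r|).
Proof. by rewrite nth_cat. Qed.

End RootedList.

Section CoordinateForm.
Context {R : realType} {d : Order.disp_t} {G : orderType d}.
Variable f : G -> G -> bool.

Definition fbilin_coord m (La Lb : nat -> G) (ya yb : G -> R[i]) : R[i] :=
  \sum_(u < m) \sum_(v < m) (if fedge f (La u) (Lb v) then ya (La u) * yb (Lb v) else 0).

Lemma cmod_mulB_le (a b a' b' : R[i]) (M e : R) :
  cmod (a - a') <= e -> cmod (b - b') <= e -> cmod a' <= M -> cmod b <= M ->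
  cmod (a * b - a' * b') <= 2 * M * e.
Proof.
move=> h1 h2 h3 h4.
have -> : a * b - a' * b' = (a - a') * b + a' * (b - b') by ring.
apply: le_trans (cmodD _ _) _; rewrite !cmodM.
have := ler_pM (cmod_ge0 _) (cmod_ge0 _) h1 h4.
have := ler_pM (cmod_ge0 _) (cmod_ge0 _) h3 h2.
by have := le_trans (cmod_ge0 _) h1; lra.
Qed.

Lemma fbilin_coord_jump m (K : 'I_m) (La Lb La' Lb' : nat -> G)
    (ya yb ya' yb' : G -> R[i]) (M e : R) :
  (forall u v : 'I_m, (u != K) || (v != K) ->
     fedge f (La u) (Lb v) = fedge f (La' u) (Lb' v)) ->
  fedge f (La K) (Lb K) -> ~~ fedge f (La' K) (Lb' K) ->
  ya (La K) = 1 -> yb (Lb K) = 1 ->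
  (forall u : 'I_m, cmod (ya (La u) - ya' (La' u)) <= e) ->
  (forall v : 'I_m, cmod (yb (Lb v) - yb' (Lb' v)) <= e) ->
  (forall u : 'I_m, cmod (ya' (La' u)) <= M) ->
  (forall v : 'I_m, cmod (yb (Lb v)) <= M) ->
  cmod (fbilin_coord m La Lb ya yb - fbilin_coord m La' Lb' ya' yb' - 1)
    <= m%:R * m%:R * (2 * M * e).
Proof.
move=> hedge hK hK' ya1 yb1 hca hcb hMa hMb.
have c0 : 0 <= 2 * M * e.
  by rewrite !mulr_ge0 // (le_trans (cmod_ge0 _) (hca K), le_trans (cmod_ge0 _) (hMb K)).
have one : 1 = \sum_(u < m) \sum_(v < m) (if (u == K) && (v == K) then 1 else 0 : R[i]).
  rewrite (bigD1 K) //= [X in _ + X]big1 ?addr0; last first.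
    by move=> u uK; apply: big1 => v _; rewrite (negbTE uK).
  rewrite (bigD1 K) //= eqxx [X in _ + X]big1 ?addr0 //.
  by move=> v vK; rewrite (negbTE vK) andbF.
have sum_const (c : R) : \sum_(u < m) c = m%:R * c by rewrite sumr_const card_ord mulr_natl.
rewrite one /fbilin_coord -!sumrB -mulrA -sum_const.
apply: le_trans (cmod_sum _ _ _ _) _; apply: ler_sum => u _.
rewrite -!sumrB -sum_const.
apply: le_trans (cmod_sum _ _ _ _) _; apply: ler_sum => v _.
have [uK|uK] := eqVneq u K; have [vK|vK] := eqVneq v K.
- by rewrite uK vK /= hK (negbTE hK') ya1 yb1 mulr1 subr0 subrr cmod0.
all: rewrite -hedge ?uK ?vK ?orbT // subr0; case: ifP => _; last by rewrite subrr cmod0.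
all: exact: cmod_mulB_le.
Qed.

End CoordinateForm.

Section HomogeneousFamily.
Context {R : realType} {d : Order.disp_t} {G : orderType d}.
Variables (f : G -> G -> bool) (Y : set (G -> R[i])).
Hypotheses (fsym : symmetric_colouring f) (hY : l1_subspace Y).
Hypothesis hYP : forall y, Y y -> Pf_eq f y 0.
Variables (x0 : G) (M e : R) (y : G -> G -> R[i]) (r : {fset G}) (t : G -> {fset G}).
Variables (J : set G) (n k : nat).
Hypotheses (hM : 0 < M) (hkn : (k < n)%N).
Hypothesis hyY : forall g, J g -> Y (y g).
Hypothesis hy1 : forall g, J g -> y g g = 1.
Hypothesis hyM : forall g, J g -> forall F : {fset G}, \sum_(x <- F) cmod (y g x) <= M.
(* This tail bound makes truncating y_g to r + t_g change [fbilin] by at most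
   2 M / (16 M) = 1/8. *)
Hypothesis hytail : forall g, J g -> forall E : {fset G},
  \sum_(x <- E | x \notin (r `|` t g)%fset) cmod (y g x) <= 1 / (16%:R * M).
Hypothesis htr : forall g, J g -> forall x, x \in t g -> x \notin r.
Hypothesis htdis : forall g h, J g -> J h -> g <> h -> (t g `&` t h)%fset = fset0.
Hypothesis htsize : forall g, J g -> #|` t g| = n.
Hypothesis hk : forall g, J g -> ith x0 (t g) k = g.
Hypothesis hpat : forall g h x p, J g -> J h -> x \in r -> (p < n)%N ->
  f x (ith x0 (t g) p) = f x (ith x0 (t h) p).
Let m := (#|` r| + n)%N.
Let supp g := nth x0 (rooted_list r (t g)).
Hypothesis hclose : forall g h u, J g -> J h -> (u < m)%N ->
  cmod (y g (supp g u) - y h (supp h u)) <= e.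
Hypothesis he : m%:R * m%:R * (2 * M * e) <= 1 / 4%:R.

Let B g h := fbilin_coord f m (supp g) (supp h) (y g) (y h).
Let trunc g x := if x \in (r `|` t g)%fset then y g x else 0.

Lemma size_supp {g} : J g -> size (rooted_list r (t g)) = m.
Proof. by move=> Jg; rewrite size_rooted_list htsize. Qed.

Lemma mem_supp {g u} : J g -> (u < m)%N -> supp g u \in (r `|` t g)%fset.
Proof.
move=> Jg hu; have := perm_mem (perm_rooted_list (htr _ Jg)) (supp g u).
by rewrite mem_nth ?size_supp // => ->.
Qed.

Lemma cmod_family_le {g} x : J g -> cmod (y g x) <= M.
Proof. by move=> Jg; have := hyM _ Jg [fset x]%fset; rewrite big_seq_fset1. Qed.

Lemma fbilin_trunc {g h E} : J g -> J h -> ((r `|` t g) `|` t h `<=` E)%fset ->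
  fbilin f E (trunc g) (trunc h) = B g h.
Proof.
move=> Jg Jh hE.
have sg : (r `|` t g `<=` E)%fset := fsubset_trans (fsubsetUl _ _) hE.
have sh : (r `|` t h `<=` E)%fset.
  apply: fsubset_trans hE; apply/fsubsetP => x.
  by rewrite !in_fsetU => /orP [] ->; rewrite ?orbT.
rewrite /fbilin (big_fset_supp_nth x0 sg (perm_rooted_list (htr _ Jg))); last first.
  move=> x hx; apply: big1 => j _; rewrite /trunc (negbTE hx).
  by case: ifP => _ //; rewrite mul0r.
rewrite size_supp //; apply: eq_bigr => u _.
rewrite (big_fset_supp_nth x0 sh (perm_rooted_list (htr _ Jh))); last first.
  by move=> x hx; rewrite /trunc (negbTE hx); case: ifP => _ //; rewrite mulr0.
rewrite size_supp //; apply: eq_bigr => v _.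
by rewrite /trunc (mem_supp Jg (ltn_ord u)) (mem_supp Jh (ltn_ord v)).
Qed.

Lemma sum_trunc_err {g} (E : {fset G}) : J g ->
  \sum_(x <- E) cmod (y g x - trunc g x) <= 1 / (16%:R * M).
Proof.
move=> Jg; apply: le_trans _ (hytail _ Jg E); rewrite [X in _ <= X]big_mkcond /=.
by apply: ler_sum => x _; rewrite /trunc; case: ifP => _; rewrite ?subrr ?cmod0 ?subr0.
Qed.

Lemma sum_trunc_le {g} (E : {fset G}) : J g -> \sum_(x <- E) cmod (trunc g x) <= M.
Proof.
move=> Jg; apply: le_trans _ (hyM _ Jg E); apply: ler_sum => x _.
by rewrite /trunc; case: ifP; rewrite ?cmod0 ?cmod_ge0.
Qed.

Lemma fbilin_trunc_err {g h} (E : {fset G}) : J g -> J h ->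
  cmod (fbilin f E (y g) (y h) - fbilin f E (trunc g) (trunc h)) <= 1 / 8%:R.
Proof.
move=> Jg Jh; rewrite fbilinB; apply: le_trans (cmodD _ _) _.
apply: le_trans (lerD (fbilin_le _ _ _ _) (fbilin_le _ _ _ _)) _.
have := ler_pM (sum_cmod_ge0 _ _ _ _) (sum_cmod_ge0 _ _ _ _)
  (sum_trunc_err E Jg) (hyM _ Jh E).
have := ler_pM (sum_cmod_ge0 _ _ _ _) (sum_cmod_ge0 _ _ _ _)
  (sum_trunc_le E Jg) (sum_trunc_err E Jh).
have -> : 1 / 8%:R = M * (1 / (16%:R * M)) + M * (1 / (16%:R * M)) :> R.
  by field; rewrite gt_eqF.
by rewrite [_ * M]mulrC; lra.
Qed.

Lemma coord_form_small {g h} : J g -> J h -> cmod (B g h) < 1 / 4%:R.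
Proof.
move=> Jg Jh.
have Yg := hyY _ Jg; have Yh := hyY _ Jh; have [_ _ hadd _] := hY.
have [|E0 hE0] :=
  fbilin_small f fsym (hYP _ Yg) (hYP _ Yh) (hYP _ (hadd _ _ Yg Yh)) (1 / 8%:R).
  by rewrite divr_gt0 // ltr0n.
pose E := (E0 `|` ((r `|` t g) `|` t h))%fset.
rewrite -(fbilin_trunc Jg Jh (fsubsetUr E0 _)).
set By := fbilin f E (y g) (y h); set Bt := fbilin f E _ _.
have -> : Bt = By - (By - Bt) by rewrite opprB addrC subrK.
apply: le_lt_trans (cmodB_le _ _) _.
by have := fbilin_trunc_err E Jg Jh; have := hE0 E (fsubsetUl _ _); lra.
Qed.

(* The index of g in [supp g]. *)
Let K : 'I_m := Ordinal (etrans (ltn_add2l _ _ _) hkn).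

Lemma fedge_supp_agree a b a' b' : J a -> J b -> J a' -> J b' -> a <> b -> a' <> b' ->
  (forall i j, (i < n)%N -> (j < n)%N -> (i, j) <> (k, k) ->
     f (ith x0 (t a) i) (ith x0 (t b) j) = f (ith x0 (t a') i) (ith x0 (t b') j)) ->
  forall u v : 'I_m, (u != K) || (v != K) ->
    fedge f (supp a u) (supp b v) = fedge f (supp a' u) (supp b' v).
Proof.
move=> Ja Jb Ja' Jb' ab ab' hij u v huv.
have ith_t g p : J g -> (p < n)%N -> ith x0 (t g) p \in t g.
  by move=> Jg hp; apply: mem_ith; rewrite htsize.
have neq_rt g x p : J g -> x \in r -> (p < n)%N -> x != ith x0 (t g) p.
  by move=> Jg xr hp; apply: contraTneq xr => ->; apply: htr (ith_t _ _ Jg hp).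
have neq_tt g h p q : J g -> J h -> g <> h -> (p < n)%N -> (q < n)%N ->
    ith x0 (t g) p != ith x0 (t h) q.
  move=> Jg Jh gh hp hq; apply/eqP => e1.
  move: (htdis _ _ Jg Jh gh) => /fsetP /(_ (ith x0 (t g) p)).
  by rewrite in_fsetI in_fset0 ith_t // e1 ith_t.
have fedgeE x z x' z' : x != z -> x' != z' -> f x z = f x' z' ->
    fedge f x z = fedge f x' z'.
  by move=> h1 h2 h3; rewrite /fedge h1 h2 h3.
have hu := ltn_ord u; have hv := ltn_ord v.
rewrite /supp !nth_rooted_list.
case: (ltnP u #|` r|) => hur; case: (ltnP v #|` r|) => hvr //.
- have hq : (v - #|` r| < n)%N by rewrite ltn_subLR.
  have xr : nth x0 (enum_fset r) u \in r by apply: mem_nth.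
  by apply: fedgeE; [exact: neq_rt | exact: neq_rt | exact: hpat].
- have hp : (u - #|` r| < n)%N by rewrite ltn_subLR.
  have xr : nth x0 (enum_fset r) v \in r by apply: mem_nth.
  apply: fedgeE; [by rewrite eq_sym neq_rt | by rewrite eq_sym neq_rt |].
  by rewrite fsym [RHS]fsym; apply: hpat.
have hp : (u - #|` r| < n)%N by rewrite ltn_subLR.
have hq : (v - #|` r| < n)%N by rewrite ltn_subLR.
apply: fedgeE; [exact: neq_tt | exact: neq_tt |].
apply: hij => // -[e1 e2]; move: huv.
have -> : u = K by apply: val_inj; rewrite /= -e1 subnKC.
have -> : v = K by apply: val_inj; rewrite /= -e2 subnKC.
by rewrite eqxx.
Qed.

Lemma coord_form_jump {a b a' b'} : J a -> J b -> J a' -> J b' -> a <> b -> a' <> b' ->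
  f (ith x0 (t a) k) (ith x0 (t b) k) -> ~~ f (ith x0 (t a') k) (ith x0 (t b') k) ->
  (forall i j, (i < n)%N -> (j < n)%N -> (i, j) <> (k, k) ->
     f (ith x0 (t a) i) (ith x0 (t b) j) = f (ith x0 (t a') i) (ith x0 (t b') j)) ->
  cmod (B a b - B a' b' - 1) <= 1 / 4%:R.
Proof.
move=> Ja Jb Ja' Jb' ab ab' fab fab' hij.
have suppK g : J g -> supp g K = g.
  by move=> Jg; rewrite /supp nth_rooted_list /= ltnNge leq_addr addKn hk.
rewrite !hk // in fab fab'.
apply: le_trans he; apply: (fbilin_coord_jump f _ K) => //.
- exact: fedge_supp_agree.
- by rewrite !suppK // /fedge fab andbT; apply/eqP.
- by rewrite !suppK // /fedge (negbTE fab') andbF.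
- by rewrite suppK // hy1.
- by rewrite suppK // hy1.
- by move=> u; apply: hclose.
- by move=> v; apply: hclose.
- by move=> u; apply: cmod_family_le.
- by move=> v; apply: cmod_family_le.
Qed.

Lemma homogeneous_countable : partition_first_kind f -> countable J.
Proof.
move=> hf; apply: contrapT => nJ.
have [a [b [a' [b' [Ja Jb Ja' Jb' [ab ab' fab fab' hij]]]]]] :=
  first_kind_indexed f x0 hf nJ htsize htdis hkn.
have := coord_form_jump Ja Jb Ja' Jb' ab ab' fab fab' hij.
have := coord_form_small Ja Jb; have := coord_form_small Ja' Jb'.
set w := B a b; set w' := B a' b'.
have : cmod (w - w' - (w - w' - 1)) <= cmod w + cmod w' + cmod (w - w' - 1).
  by apply: le_trans (cmodB_le _ _) _; rewrite lerD2r cmodB_le.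
have -> : w - w' - (w - w' - 1) = 1 by ring.
by rewrite cmod1; lra.
Qed.

End HomogeneousFamily.

Section UncountableSupport.
Context {R : realType} {T : choiceType}.
Variable Y : set (T -> R[i]).
Hypothesis hY : l1_subspace Y.

Lemma normalized_family : ~ countable (joint_support Y) ->
  exists (M : R) (D : set T) (y : T -> T -> R[i]), [/\ 0 < M, ~ countable D &
    forall g, D g -> [/\ Y (y g), y g g = 1 &
      forall F : {fset T}, \sum_(x <- F) cmod (y g x) <= M]].
Proof.
case: hY => hl1 _ _ hmul nS.
pose P (N : nat) g := exists y, [/\ Y y, y g = 1 &
  forall F : {fset T}, \sum_(x <- F) cmod (y x) <= N%:R].
have hP g : joint_support Y g -> exists N, P N g.
  move=> [y [Yy yg]]; have [M0 hM0] := hl1 _ (hmul (y g)^-1 y Yy).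
  exists (Num.bound `|M0|), (fun x => (y g)^-1 * y x); split; first exact: hmul.
    by rewrite mulVf.
  move=> F; apply: le_trans (hM0 F) _; apply: le_trans (ler_norm _) _.
  exact/ltW/archi_boundP.
have [N nD] := uncountable_pigeonhole nS hP.
have /all_sig [y hy] g : {y | (joint_support Y `&` P N) g -> [/\ Y y, y g = 1 &
    forall F : {fset T}, \sum_(x <- F) cmod (y x) <= N%:R]}.
  case: (pselect ((joint_support Y `&` P N) g)) => [[_ /cid [y hy]]|ng]; first by exists y.
  by exists (fun=> 0) => /ng.
exists N.+1%:R, (joint_support Y `&` P N), y; split=> [|//|g Dg]; first by rewrite ltr0n.
have [Yg g1 hb] := hy g Dg; split=> // F.
by apply: le_trans (hb F) _; rewrite ler_nat.
Qed.

End UncountableSupport.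

(* The finite essential supports F_g of the y_g are refined to a Delta-system
   with root r, and t_g := F_g \ r. *)
Lemma localized_family {R : realType} {T : choiceType} {D : set T}
    {y : T -> T -> R[i]} {del : R} :
  0 < del -> ~ countable D -> (forall g, D g -> in_l1 (y g)) ->
  exists J r (t : T -> {fset T}), [/\ J `<=` D, ~ countable J,
    forall g, J g -> g \in t g /\ forall x, x \in t g -> x \notin r,
    forall g h, J g -> J h -> g <> h -> (t g `&` t h)%fset = fset0 &
    forall g, J g -> forall E : {fset T},
      \sum_(x <- E | x \notin (r `|` t g)%fset) cmod (y g x) <= del].
Proof.
move=> hdel nD hl1.
have /all_sig [F hF] g : {F : {fset T} | D g -> g \in F /\
    forall E : {fset T}, \sum_(x <- E | x \notin F) cmod (y g x) <= del}.
  apply: cid; case: (pselect (D g)) => [Dg|nDg]; last by exists fset0.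
  have [F0 hF0] := l1_tail_small (hl1 _ Dg) _ hdel.
  exists (g |` F0)%fset => _; split; first by rewrite fset1U1.
  move=> E; apply: le_trans (hF0 E); rewrite big_mkcond [X in _ <= X]big_mkcond /=.
  apply: ler_sum => x _; rewrite in_fset1U negb_or.
  by case: (x \in F0); case: (x == g); rewrite /= ?cmod_ge0.
have [N nDN] := uncountable_fiber (fun g => #|` F g|) nD.
have [J [r [JD nJ hJ]]] := delta_system F nDN (fun g h => h.2).
exists (J `\` [set` r]), r, (fun g => (F g `\` r)%fset); split.
- by move=> g [/JD []].
- exact: uncountable_setD nJ (countable_fset r).
- move=> g [/JD [Dg _] gr]; split; last by move=> x; rewrite in_fsetD => /andP [].
  rewrite in_fsetD.
  by rewrite (hF g Dg).1 andbT; apply/negP.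
- move=> g h [Jg _] [Jh _] gh; apply/fsetP => x; rewrite in_fset0 !in_fsetI !in_fsetD.
  apply/negP => /andP [/andP [xr xg] /andP [_ xh]].
  by move: xr; rewrite -(hJ g h Jg Jh gh) in_fsetI xg xh.
- move=> g [/JD [Dg _] _] E; apply: le_trans ((hF g Dg).2 E).
  rewrite big_mkcond [X in _ <= X]big_mkcond /=; apply: ler_sum => x _.
  rewrite in_fsetU in_fsetD.
  by case: (x \in r); case: (x \in F g); rewrite /= ?cmod_ge0 ?lexx.
Qed.

Lemma grid_precision {R : realType} (m : nat) {M : R} : 0 < M ->
  exists q : nat, m%:R * m%:R * (2 * M * (2 / q.+1%:R)) <= 1 / 4%:R.
Proof.
move=> hM; have hX : 0 < 16%:R * M * (m * m)%:R + 1 by rewrite ltr_pwDr // !mulr_ge0 // ltW.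
have [q hq] : exists q : nat, 1 / q.+1%:R < (16%:R * M * (m * m)%:R + 1)^-1.
  by apply: exists_inv_nat_lt; rewrite invr_gt0.
exists q; move: hq; rewrite -[X in _ < X]div1r ltr_pdivlMr // natrM.
rewrite [2 / _]mulrC -[_^-1]div1r.
set a := 1 / (q.+1%:R : R); set Q := (m%:R : R).
have ha : 0 <= a by rewrite divr_ge0 // ler0n.
have hQ : 0 <= Q by rewrite /Q ler0n.
have : 0 <= a * (M * (Q * Q)) by rewrite mulr_ge0 // mulr_ge0 ?mulr_ge0 // ltW.
lra.
Qed.

Section Support.
Context {R : realType} {d : Order.disp_t} {G : orderType d}.
Variables (f : G -> G -> bool) (Y : set (G -> R[i])).
Hypotheses (fsym : symmetric_colouring f) (hf : partition_first_kind f).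
Hypotheses (hY : l1_subspace Y) (hYP : forall y, Y y -> Pf_eq f y 0).

Lemma joint_support_countable : countable (joint_support Y).
Proof.
apply: contrapT => nS; have [hl1 _ _ _] := hY.
have [M [D [y [hM nD hy]]]] := normalized_family _ hY nS.
have hdel : 0 < 1 / (16%:R * M) by rewrite divr_gt0 // mulr_gt0 // ltr0n.
have hl1D g : D g -> in_l1 (y g) by move=> /hy [Yg _ _]; exact: hl1.
have [J [r [t [JD nJ htg htdis htail]]]] := localized_family hdel nD hl1D.
have [x0 _] := uncountable_ex nJ.
have [n nJn] := uncountable_fiber (fun g => #|` t g|) nJ.
have hpos g : (J `&` [set g | #|` t g| = n]) g ->
    exists k, (k < n)%N /\ ith x0 (t g) k = g.
  by move=> [Jg <-]; have [k hk ek] := ith_index x0 (htg g Jg).1; exists k.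
have [k nJk] := uncountable_pigeonhole nJn hpos.
pose pattern g := [seq [seq f x (ith x0 (t g) p) | x <- enum_fset r] | p <- iota 0 n].
have [P nJP] := uncountable_fiber pattern nJk.
have [q hq] := grid_precision (#|` r| + n) hM.
pose code g := [seq grid_point q (y g x) | x <- rooted_list r (t g)].
have [c nJc] := uncountable_fiber code nJP.
move: nJc; set Jhom := (X in ~ countable X) => nJc.
have JhomE g : Jhom g ->
    [/\ J g, #|` t g| = n, ith x0 (t g) k = g, pattern g = P & code g = c].
  by move=> [[[[? ?] [_ ?]] ?] ?].
have [g0 [[[_ [kn _]] _] _]] := uncountable_ex nJc.
apply: nJc.
apply: (homogeneous_countable f Y fsym hY hYP x0 M (2 / q.+1%:R) y r t _ n k hM kn) => //.
- by move=> g /JhomE [/JD /hy []].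
- by move=> g /JhomE [/JD /hy []].
- by move=> g /JhomE [/JD /hy []].
- by move=> g /JhomE [/htail].
- by move=> g /JhomE [/htg []].
- by move=> g h /JhomE [Jg _ _ _ _] /JhomE [Jh _ _ _ _]; apply: htdis.
- by move=> g /JhomE [].
- by move=> g /JhomE [].
- move=> g h x p /JhomE [_ _ _ pg _] /JhomE [_ _ _ ph _] xr hp.
  have pn : p \in iota 0 n by rewrite mem_iota.
  have : pattern g = pattern h by rewrite pg ph.
  by move=> /eq_in_map /(_ p pn) /eq_in_map /(_ x xr).
- move=> g h u /JhomE [_ gn _ _ cg] /JhomE [_ hn _ _ ch] hu; apply: grid_point_close.
  have := congr1 (fun s => nth (0%Z, 0%Z) s u) (etrans cg (esym ch)).
  by rewrite /= /code !(nth_map x0) ?size_rooted_list ?gn ?hn.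
Qed.

End Support.

Theorem mainTheorem4 (R : realType) (d : Order.disp_t) (G : orderType d)
  (wfG : well_founded (fun x y : G => (x < y)%O))
  (f : G -> G -> bool) (fsym : symmetric_colouring f)
  (hf : partition_first_kind f)
  (Y : set (G -> R[i])) (hY : l1_subspace Y)
  (hYP : forall y, Y y -> Pf_eq f y 0) :
  l1_separable Y.
Proof.
apply: (l1_separable_countable_support Y hY).
exact: (joint_support_countable f Y fsym hf hY hYP).
Qed.
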